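(* Let $P$ be a finite subset of a metric space with metric $\|\cdot-\cdot\|$, let $Q\subseteq P$ be finite, let $\rho\ge 0$ and let $t\ge 1$ be an integer. Let $M$ be the set of critical simplices of the filtered relaxed Delaunay complex $\mathrm{Del}^\rho(Q,P)$ (with filtration defined below). For every $x\in P$ and $\ell\in\{1,\ldots,|Q|\}$ let $D(x,\ell)$ be the $\ell$-th nearest neighbor of $x$ in $Q$ (ties broken arbitrarily); for $i\in\{0,1,\ldots,t\}$ let $\ell_x^i$ be the largest integer $\ell$ such that $\bigl|\|x-D(x,1)\|-\|x-D(x,\ell)\|\bigr|\le\rho i/t$, let $\sigma_x^i=\{D(x,1),D(x,2),\ldots,D(x,\ell_x^i)\}$, and let $W=\{\sigma_x^i : x\in P,\ i\in\{0,1,\ldots,t\}\}$. Then $M\subseteq W$.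
   Context: For $r\ge 0$, the relaxed Delaunay complex $\mathrm{Del}^r(Q,P)$ is the simplicial complex with vertex set $Q$ in which a simplex $\sigma=\{q_0,\ldots,q_s\}\subseteq Q$ belongs to $\mathrm{Del}^r(Q,P)$ iff there exists $x\in P$ such that $\|x-q_j\|\le\|x-q\|+r$ for all $q_j\in\sigma$ and all $q\in Q$. The filtration on $\mathrm{Del}^\rho(Q,P)$ takes values in $\{0,1,\ldots,t\}$: the filtration value $f(\sigma)$ of $\sigma\in\mathrm{Del}^\rho(Q,P)$ is the smallest $i\in\{0,\ldots,t\}$ such that $\sigma\in\mathrm{Del}^{\rho i/t}(Q,P)$. A simplex $\sigma$ is critical if $f(\sigma)<f(\tau)$ for every proper coface $\tau\supsetneq\sigma$ in the complex. *)

From HB Require Import structures.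
From mathcomp Require Import all_boot all_order all_algebra.
From mathcomp Require Import finmap.
From mathcomp Require Import reals.
Set Implicit Arguments. Unset Strict Implicit. Unset Printing Implicit Defensive.
Import Order.TTheory GRing.Theory Num.Theory.
Local Open Scope ring_scope.

Section Defs.
Variables (R : realType) (T : choiceType) (dist : T -> T -> R).

Definition is_metric : Prop :=
  [/\ forall x y, 0 <= dist x y,
      forall x y, dist x y = 0 <-> x = y,
      forall x y, dist x y = dist y x
    & forall x y z, dist x z <= dist x y + dist y z].

Definition in_Del (r : R) (Q P sigma : {fset T}) : bool :=
  [&& (sigma `<=` Q)%fset, sigma != fset0%fset &
      has (fun x => all (fun qj => all (fun q => dist x qj <= dist x q + r)
                                       (enum_fset Q))
                        (enum_fset sigma))
          (enum_fset P)].

Definition filt (rho : R) (t : nat) (Q P sigma : {fset T}) : nat :=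
  find (fun i : nat => in_Del (rho * i%:R / t%:R) Q P sigma) (iota 0 t.+1).

Definition critical (rho : R) (t : nat) (Q P sigma : {fset T}) : Prop :=
  in_Del rho Q P sigma /\
  forall tau : {fset T}, in_Del rho Q P tau -> (sigma `<` tau)%fset ->
    (filt rho t Q P sigma < filt rho t Q P tau)%N.

(* D x is the list of points of Q ordered by nearest-neighbour rank from x:
   D(x, l) = nth x (D x) l.-1 (1-indexed). *)
Definition nn_order (Q : {fset T}) (x : T) (s : seq T) : Prop :=
  perm_eq s (enum_fset Q) /\ sorted (fun a b => dist x a <= dist x b) s.

Definition ell (rho : R) (t : nat) (Q : {fset T}) (D : T -> seq T) (x : T) (i : nat) : nat :=
  \max_(l < #|` Q|%fset.+1 | (1 <= (l : nat))%N &&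
        (`|dist x (nth x (D x) 0) - dist x (nth x (D x) (l : nat).-1)|
           <= rho * i%:R / t%:R)) (l : nat).

Definition sigma_xi (rho : R) (t : nat) (Q : {fset T}) (D : T -> seq T) (x : T) (i : nat) : {fset T} :=
  [fset y | y in take (ell rho t Q D x i) (D x)]%fset.

End Defs.

From HB Require Import structures.
From mathcomp Require Import all_boot all_order all_algebra.
From mathcomp Require Import finmap.
From mathcomp Require Import reals.
Set Implicit Arguments. Unset Strict Implicit. Unset Printing Implicit Defensive.
Import Order.TTheory GRing.Theory Num.Theory.
Local Open Scope ring_scope.

(* Let sigma be critical with filtration value i, and let x in P witness that
   sigma lies in Del^r(Q,P) for r = rho i / t.  Every vertex of sigma is then
   within d(x, D(x,1)) + r of x, so sigma is contained in sigma_x^i, which is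
   exactly the set of points of Q within that distance of x.  The same x
   witnesses sigma_x^i in Del^r(Q,P), since D(x,1) is nearest to x; hence the
   coface sigma_x^i of sigma has filtration value at most i, and criticality
   forces sigma = sigma_x^i. *)

Section RelaxedDelaunay.
Variables (R : realType) (T : choiceType) (dist : T -> T -> R).
Variables (Q P : {fset T}).

Lemma in_DelP r sigma :
  reflect [/\ (sigma `<=` Q)%fset, sigma != fset0 &
              exists2 x, x \in P & forall qj q, qj \in sigma -> q \in Q ->
                                     dist x qj <= dist x q + r]
          (in_Del dist r Q P sigma).
Proof.
apply: (iffP and3P) => -[sQ sn0 Hx]; split => //.
  case/hasP: Hx => x xP /allP Hx; exists x => // qj q qjs qQ.
  exact: (allP (Hx qj qjs)).
case: Hx => x xP Hx; apply/hasP; exists x => //.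
by apply/allP => qj qjs; apply/allP => q qQ; apply: Hx.
Qed.

Lemma in_Del_le r r' sigma :
  r <= r' -> in_Del dist r Q P sigma -> in_Del dist r' Q P sigma.
Proof.
move=> le_rr' /in_DelP[sQ sn0 [x xP Hx]]; apply/in_DelP; split => //.
exists x => // qj q qjs qQ; apply: le_trans (Hx qj q qjs qQ) _.
by rewrite lerD2l.
Qed.

Variables (rho : R) (t : nat).
Hypothesis t_gt0 : (0 < t)%N.

Lemma filt_le i sigma :
  (i <= t)%N -> in_Del dist (rho * i%:R / t%:R) Q P sigma ->
  (filt dist rho t Q P sigma <= i)%N.
Proof.
move=> le_it sigma_i; rewrite leqNgt; apply/negP => /(before_find 0).
by rewrite nth_iota ?ltnS // add0n sigma_i.
Qed.

Lemma in_Del_at_filt sigma :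
  in_Del dist rho Q P sigma ->
  in_Del dist (rho * (filt dist rho t Q P sigma)%:R / t%:R) Q P sigma.
Proof.
move=> sigma_rho.
have sigma_t : in_Del dist (rho * t%:R / t%:R) Q P sigma.
  by rewrite mulfK // pnatr_eq0 -lt0n.
have has_level : has (fun i : nat => in_Del dist (rho * i%:R / t%:R) Q P sigma)
                     (iota 0 t.+1).
  by apply/hasP; exists t => //; rewrite mem_iota ltnSn.
have := nth_find 0 has_level; rewrite nth_iota ?add0n //.
by move: has_level; rewrite has_find size_iota.
Qed.

Lemma level_le (i : nat) : 0 <= rho -> (i <= t)%N -> rho * i%:R / t%:R <= rho.
Proof.
move=> rho_ge0 le_it; rewrite -mulrA -[leRHS]mulr1; apply: ler_wpM2l => //.
by rewrite ler_pdivrMr ?ltr0n // mul1r ler_nat.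
Qed.

Lemma critical_eq sigma tau :
  critical dist rho t Q P sigma -> (sigma `<=` tau)%fset ->
  in_Del dist rho Q P tau ->
  (filt dist rho t Q P tau <= filt dist rho t Q P sigma)%N -> sigma = tau.
Proof.
move=> [_ crit] sub_st tau_rho le_filt; apply/eqP/negPn/negP => neq_st.
have := crit tau tau_rho; rewrite fproperEneq neq_st sub_st => /(_ isT).
by rewrite ltnNge le_filt.
Qed.

End RelaxedDelaunay.

Section NearestNeighbourOrder.
Variables (R : realType) (T : choiceType) (dist : T -> T -> R).
Variables (Q : {fset T}) (D : T -> seq T) (x : T).
Hypothesis HD : nn_order dist Q x (D x).

Local Notation s := (D x).
Local Notation d1 := (dist x (nth x (D x) 0)).

Lemma mem_nn y : (y \in s) = (y \in Q).
Proof. by rewrite (perm_mem HD.1). Qed.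

Lemma size_nn : size s = #|` Q|%fset.
Proof. by rewrite (perm_size HD.1). Qed.

Lemma nn_dist_le a b :
  (a <= b)%N -> (b < size s)%N -> dist x (nth x s a) <= dist x (nth x s b).
Proof.
move=> le_ab lt_b; apply: (sorted_leq_nth _ _ x HD.2) => //.
- by move=> ? ? ?; apply: le_trans.
- by rewrite inE (leq_ltn_trans le_ab).
Qed.

Lemma nn_head_min q : q \in Q -> d1 <= dist x q.
Proof.
by rewrite -mem_nn => qs; rewrite -(nth_index x qs) nn_dist_le // index_mem.
Qed.

Lemma nn_head_mem : Q != fset0 -> nth x s 0 \in Q.
Proof.
by case/fset0Pn => q; rewrite -!mem_nn; case: (D x) => // y s' _; apply: mem_head.
Qed.

Variables (rho : R) (t i : nat).
Local Notation r := (rho * i%:R / t%:R).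

Lemma ell_spec k :
  (k < size s)%N -> (k < ell dist rho t Q D x i)%N = (dist x (nth x s k) <= d1 + r).
Proof.
have cond l : (l < size s)%N ->
    (`|d1 - dist x (nth x s l)| <= r) = (dist x (nth x s l) <= d1 + r).
  move=> lt_l; rewrite distrC ger0_norm ?subr_ge0 ?nn_dist_le //.
  by rewrite lerBlDl addrC.
move=> lt_k; apply/idP/idP => [lt_k_ell | near_k].
  apply: contraLR lt_k_ell; rewrite -leqNgt -ltNge => far_k.
  apply/bigmax_leqP => l /andP[l_ge1]; rewrite /= cond; last first.
    by rewrite size_nn -ltnS prednK.
  apply: contraLR; rewrite -ltnNge -ltNge => lt_kl.
  apply: (lt_le_trans far_k); apply: nn_dist_le; first by rewrite -ltnS prednK.
  by rewrite size_nn -ltnS prednK.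
have lt_kQ : (k.+1 < #|` Q|%fset.+1)%N by rewrite ltnS -size_nn.
by apply: (leq_bigmax_cond (Ordinal lt_kQ)); rewrite /= cond.
Qed.

Lemma mem_sigma_xi y :
  (y \in sigma_xi dist rho t Q D x i) = (y \in Q) && (dist x y <= d1 + r).
Proof.
rewrite inE; have [ys | ys] := boolP (y \in s); last first.
  by rewrite -mem_nn (negbTE ys); apply/negbTE; apply: contra ys; apply: mem_take.
by rewrite in_take // ell_spec ?index_mem // nth_index // -mem_nn ys.
Qed.

Lemma sub_sigma_xi sigma :
  (sigma `<=` Q)%fset ->
  (forall qj q, qj \in sigma -> q \in Q -> dist x qj <= dist x q + r) ->
  Q != fset0 -> (sigma `<=` sigma_xi dist rho t Q D x i)%fset.
Proof.
move=> sQ Hx Qn0; apply/fsubsetP => qj qjs; have qjQ := fsubsetP sQ qj qjs.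
by rewrite mem_sigma_xi qjQ Hx // nn_head_mem.
Qed.

Lemma sigma_xi_in_Del (P : {fset T}) :
  0 <= r -> x \in P -> Q != fset0 ->
  in_Del dist r Q P (sigma_xi dist rho t Q D x i).
Proof.
move=> r_ge0 xP Qn0; apply/in_DelP; split.
- by apply/fsubsetP => y; rewrite mem_sigma_xi => /andP[].
- by apply/fset0Pn; exists (nth x s 0); rewrite mem_sigma_xi nn_head_mem // lerDl.
- exists x => // qj q; rewrite mem_sigma_xi => /andP[_ near_qj] qQ.
  by apply: le_trans near_qj _; rewrite lerD2r nn_head_min.
Qed.

End NearestNeighbourOrder.

Theorem lemma5 (R : realType) (T : choiceType) (dist : T -> T -> R)
  (Hmetric : is_metric dist)
  (P Q : {fset T}) (HQP : (Q `<=` P)%fset)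
  (rho : R) (Hrho : 0 <= rho) (t : nat) (Ht : (1 <= t)%N)
  (D : T -> seq T) (HD : forall x, x \in P -> nn_order dist Q x (D x)) :
  forall sigma : {fset T}, critical dist rho t Q P sigma ->
    exists2 x, x \in P &
      exists2 i : nat, (i <= t)%N & sigma = sigma_xi dist rho t Q D x i.
Proof.
move=> sigma sigma_crit; have sigma_rho := sigma_crit.1.
set i := filt dist rho t Q P sigma.
have le_it : (i <= t)%N by apply: filt_le; rewrite // mulfK // pnatr_eq0 -lt0n.
have /in_DelP[sQ sn0 [x xP Hx]] := in_Del_at_filt Ht sigma_rho.
have Qn0 : Q != fset0.
  by case/fset0Pn: sn0 => q qs; apply/fset0Pn; exists q; apply: (fsubsetP sQ).
exists x => //; exists i => //.
have r_ge0 : 0 <= rho * i%:R / t%:R by rewrite divr_ge0 ?mulr_ge0.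
have tau_i := sigma_xi_in_Del (HD x xP) r_ge0 xP Qn0.
apply: critical_eq sigma_crit (sub_sigma_xi (HD x xP) sQ Hx Qn0) _ _.
  exact: in_Del_le (level_le Ht Hrho le_it) tau_i.
exact: filt_le le_it tau_i.
Qed.
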